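(* Let $L=\sum_k(1+\alpha d_k)E_{kk}+\alpha\lambda\sum_kE_{k+1,k}$, $U=I-\alpha\sum_{j=1}^m\lambda^{-j}\sum_kc_k^{(j)}E_{k,k+j}$, $B_1=\sum_k(d_k+\alpha c_{k-1}^{(1)})E_{kk}+\lambda\sum_kE_{k+1,k}$, $B_2=\sum_k(d_k+\alpha c_k^{(1)})E_{kk}+\lambda\sum_kE_{k+1,k}$. The Lax triads $\dot L=LB_2-B_1L$, $\dot U=UB_2-B_1U$ are equivalent to the system $\dot d_k=(1+\alpha d_k)(c_k^{(1)}-c_{k-1}^{(1)})$, $\dot c_k^{(j)}=c_k^{(j)}(d_{k+j}-d_k+\alpha c_{k+j}^{(1)}-\alpha c_{k-1}^{(1)})+(c_k^{(j+1)}-c_{k-1}^{(j+1)})$ ($1\le j\le m-1$), $\dot c_k^{(m)}=c_k^{(m)}(d_{k+m}-d_k+\alpha c_{k+m}^{(1)}-\alpha c_{k-1}^{(1)})$. Moreover $B_1=\pi_+((LU^{-1}-I)/\alpha)$ and $B_2=\pi_+((U^{-1}L-I)/\alpha)$.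
   Context: Periodic lattice setting: $N\ge2$, $m\ge1$, $\alpha\ne0$ real; matrices are elements of the twisted loop algebra $\{X(\lambda)\in gl(N)[\lambda,\lambda^{-1}]:\Omega X(\lambda)\Omega^{-1}=X(\omega\lambda)\}$ ($\omega=e^{2\pi i/N}$, $\Omega=\mathrm{diag}(1,\omega,\dots,\omega^{N-1})$), with all matrix indices and subscripts modulo $N$; $E_{jk}$ matrix units. $\pi_+$ is the projection onto the part of nonnegative degree in $\lambda$; $U^{-1}$ is the formal power series in $\lambda^{-1}$. The variables are $d_k,c_k^{(j)}$, $1\le k\le N$, $1\le j\le m$. *)

From HB Require Import structures.
From mathcomp Require Import all_boot all_order all_algebra.
From mathcomp Require Import all_classical all_reals all_analysis.
Set Implicit Arguments. Unset Strict Implicit. Unset Printing Implicit Defensive.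
Import Order.TTheory GRing.Theory Num.Theory.
Local Open Scope ring_scope.

Lemma ord_gt0 (N : nat) (k : 'I_N) : (0 < N)%N.
Proof. exact: leq_ltn_trans (leq0n k) (ltn_ord k). Qed.

Definition cyc_add (N : nat) (k : 'I_N) (j : nat) : 'I_N :=
  Ordinal (ltn_pmod (k + j)%N (ord_gt0 k)).
Definition cyc_prev (N : nat) (k : 'I_N) : 'I_N := cyc_add k N.-1.

(* A matrix-valued formal Laurent series in lambda is represented by its
   coefficient function  X : int -> 'M_N,  X n = coefficient of lambda^n.
   All series used below have degree bounded above. *)
Definition lser (R : pzRingType) (N : nat) := int -> 'M[R]_N.

Definition deg_le (R : pzRingType) (N : nat) (p : int) (X : lser R N) :=
  forall n : int, p < n -> X n = 0.

(* Product of series X (degree <= p) and Y (degree <= q):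
   (XY)_n = sum_{a = n-q}^{p} X_a Y_{n-a}  (a finite sum). *)
Definition lmul (R : pzRingType) (N : nat) (p q : int) (X Y : lser R N) : lser R N :=
  fun n => \sum_(i < (absz (p + q - n)%R).+1 | n <= p + q)
              X (n - q + (i : nat)%:Z) *m Y (q - (i : nat)%:Z).

Definition lone (R : pzRingType) (N : nat) : lser R N :=
  fun n => if n == 0 then 1%:M else 0.

Definition piplus (R : pzRingType) (N : nat) (X : lser R N) : lser R N :=
  fun n => if 0 <= n then X n else 0.

Section LaxMatrices.
Variables (R : realType) (N m : nat) (alpha : R).
(* values of the variables at a given time *)
Variables (d : 'I_N -> R) (c : nat -> 'I_N -> R).  (* c j k = c_k^{(j)} *)

Definition shiftE : 'M[R]_N := \sum_(k < N) delta_mx (cyc_add k 1) k.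

Definition Lmat : lser R N := fun n =>
  if n == 0 then \sum_(k < N) (1 + alpha * d k) *: delta_mx k k
  else if n == 1 then alpha *: shiftE else 0.

Definition Umat : lser R N := fun n =>
  if n == 0 then 1%:M
  else if (n < 0) && ((absz n) <= m)%N then
    - (alpha *: \sum_(k < N) c (absz n) k *: delta_mx k (cyc_add k (absz n)))
  else 0.

Definition B1mat : lser R N := fun n =>
  if n == 0 then \sum_(k < N) (d k + alpha * c 1%N (cyc_prev k)) *: delta_mx k k
  else if n == 1 then shiftE else 0.

Definition B2mat : lser R N := fun n =>
  if n == 0 then \sum_(k < N) (d k + alpha * c 1%N k) *: delta_mx k k
  else if n == 1 then shiftE else 0.

End LaxMatrices.

Definition mderive (R : realType) (N : nat) (F : R -> 'M[R]_N) (t : R) : 'M[R]_N :=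
  \matrix_(i, j) derive1 (fun s => F s i j) t.

From HB Require Import structures.
From mathcomp Require Import all_boot all_order all_algebra.
From mathcomp Require Import all_classical all_reals all_analysis.
From mathcomp Require Import zify ring.
Set Implicit Arguments. Unset Strict Implicit. Unset Printing Implicit Defensive.
Import Order.TTheory GRing.Theory Num.Theory.
Local Open Scope ring_scope.

(* Every coefficient of L, U, B1 and B2 is a monomial matrix: row k has a single nonzero
   entry, in column g k, where g is the identity, the cyclic shift k |-> k - 1 or
   k |-> k + j.  Products of monomial matrices compose these column maps, so every
   coefficient of L B2 - B1 L and of U B2 - B1 U is again monomial; the only nonzero ones
   are the coefficient of lambda^0 in the first triad and those of lambda^-j in the
   second, and comparing them with dL/dt and dU/dt gives exactly the equations for d_k and
   c_k^(j).
   For the second part, U = 1 - Q with Q of negative degree, so U^-1 is the geometric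
   series in Q, computed degree by degree inside a polynomial ring.  As L has degree <= 1,
   pi_+ (L U^-1) only involves the top two coefficients 1 and alpha C of U^-1, where
   C = sum_k c_k^(1) E_{k,k+1}, and similarly for U^-1 L. *)

Section MonomialMatrix.
Variables (R : pzRingType) (N : nat).
Implicit Types (f : 'I_N -> R) (g : 'I_N -> 'I_N).

Definition monomial_mx f g : 'M[R]_N := \sum_(k < N) f k *: delta_mx k (g k).

Lemma monomial_mxE f g i j : monomial_mx f g i j = f i *+ (j == g i).
Proof.
rewrite /monomial_mx summxE (bigD1 i) //= big1 => [|k nki]; rewrite !mxE.
  by rewrite eqxx /= addr0 mulr_natr.
by rewrite eq_sym (negbTE nki) mulr0.
Qed.

Lemma monomial_mx_at f g i : monomial_mx f g i (g i) = f i.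
Proof. by rewrite monomial_mxE eqxx mulr1n. Qed.

Lemma monomial_mx_inj g f f' : monomial_mx f g = monomial_mx f' g -> f =1 f'.
Proof. by move=> e i; rewrite -(monomial_mx_at f g i) e monomial_mx_at. Qed.

Lemma eq_monomial_mx f f' g g' :
  f =1 f' -> g =1 g' -> monomial_mx f g = monomial_mx f' g'.
Proof. by move=> ef eg; apply: eq_bigr => k _; rewrite ef eg. Qed.

Lemma mul_monomial_mx f g f' g' :
  monomial_mx f g *m monomial_mx f' g' =
  monomial_mx (fun k => f k * f' (g k)) (fun k => g' (g k)).
Proof.
apply/matrixP => i l; rewrite !mxE (bigD1 (g i)) //= big1 => [|k nk].
  by rewrite !monomial_mxE eqxx mulr1n addr0 mulrnAr.
by rewrite monomial_mxE (negbTE nk) mulr0n mul0r.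
Qed.

Lemma monomial_mxD f f' g :
  monomial_mx f g + monomial_mx f' g = monomial_mx (fun k => f k + f' k) g.
Proof. by apply/matrixP => i j; rewrite !mxE !monomial_mxE mulrnDl. Qed.

Lemma monomial_mxN f g : - monomial_mx f g = monomial_mx (fun k => - f k) g.
Proof. by apply/matrixP => i j; rewrite !mxE !monomial_mxE mulNrn. Qed.

Lemma monomial_mxZ a f g : a *: monomial_mx f g = monomial_mx (fun k => a * f k) g.
Proof. by apply/matrixP => i j; rewrite !mxE !monomial_mxE mulrnAr. Qed.

Lemma monomial_mx0 g : monomial_mx (fun _ => 0) g = 0.
Proof. by apply/matrixP => i j; rewrite monomial_mxE mul0rn mxE. Qed.

Lemma scalar_mx1_monomial : 1%:M = monomial_mx (fun _ => 1) (fun k => k).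
Proof. by apply/matrixP => i j; rewrite monomial_mxE !mxE eq_sym. Qed.

End MonomialMatrix.

Section CyclicIndex.
Variable N : nat.
Implicit Type k : 'I_N.

Lemma cyc_add0 k : cyc_add k 0 = k.
Proof. by apply: val_inj; rewrite /= addn0 modn_small. Qed.

Lemma cyc_prev_addS k j : cyc_prev (cyc_add k j.+1) = cyc_add k j.
Proof.
apply: val_inj; rewrite /= modnDml.
have N_gt0 := ord_gt0 k.
by rewrite (_ : (k + j.+1 + N.-1 = k + j + N)%N) ?modnDr //; lia.
Qed.

Lemma cyc_add_prevS k j : cyc_add (cyc_prev k) j.+1 = cyc_add k j.
Proof.
apply: val_inj; rewrite /= modnDml.
have N_gt0 := ord_gt0 k.
by rewrite (_ : (k + N.-1 + j.+1 = k + j + N)%N) ?modnDr //; lia.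
Qed.

End CyclicIndex.

Section MonomialShift.
Variables (R : pzRingType) (N : nat).
Implicit Type f : 'I_N -> R.

Lemma monomial_mx_add0 f : monomial_mx f (fun k => cyc_add k 0) = monomial_mx f (fun k => k).
Proof. by apply: eq_monomial_mx => // k; rewrite cyc_add0. Qed.

Lemma mul_monomial_mx_addS_prev f a j :
  monomial_mx f (fun k => cyc_add k j.+1) *m monomial_mx (fun _ => a) (@cyc_prev N) =
  monomial_mx (fun k => f k * a) (fun k => cyc_add k j).
Proof. by rewrite mul_monomial_mx; apply: eq_monomial_mx => // k; rewrite cyc_prev_addS. Qed.

Lemma mul_monomial_mx_prev_addS f a j :
  monomial_mx (fun _ => a) (@cyc_prev N) *m monomial_mx f (fun k => cyc_add k j.+1) =
  monomial_mx (fun k => a * f (cyc_prev k)) (fun k => cyc_add k j).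
Proof. by rewrite mul_monomial_mx; apply: eq_monomial_mx => // k; rewrite cyc_add_prevS. Qed.

End MonomialShift.

Section LaurentProduct.
Variables (R : pzRingType) (N : nat).
Implicit Types X Y : lser R N.

Definition supp01 X := forall n : int, n != 0 -> n != 1 -> X n = 0.

Lemma supp01_deg_le X : supp01 X -> deg_le 1 X.
Proof. by move=> X01 n n_gt1; apply: X01; lia. Qed.

Lemma lmul_supp01r (p : int) X Y n : 0 <= p -> deg_le p X -> supp01 Y ->
  lmul p 1 X Y n = X n *m Y 0 + X (n - 1) *m Y 1.
Proof.
move=> p_ge0 Xp Y01; rewrite /lmul.
case: (lerP n (p + 1)) => hn; last by rewrite big1 // !Xp ?mul0mx ?addr0 //; lia.
have : (absz (p + 1 - n)%R)%:Z = p + 1 - n by rewrite gez0_abs; lia.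
case: (absz _) => [|K] hK.
  by rewrite big_ord1 /= (Xp n) ?mul0mx ?add0r ?subr0 ?addr0 //; lia.
rewrite 2!big_ord_recl /= big1 => [|i _]; last by rewrite Y01 ?mulmx0 //; lia.
have -> : n - 1 + (bump 0 0)%:Z = n by rewrite /bump /=; lia.
have -> : 1 - (bump 0 0)%:Z = 0 by rewrite /bump /=; lia.
have -> : 1 - (0%N)%:Z = 1 :> int by [].
by rewrite addr0 addrC addr0.
Qed.

Lemma lmul_supp01l (q : int) X Y n : 0 <= q -> supp01 X -> deg_le q Y ->
  lmul 1 q X Y n = X 0 *m Y n + X 1 *m Y (n - 1).
Proof.
move=> q_ge0 X01 Yq; rewrite /lmul.
case: (lerP n (1 + q)) => hn; last by rewrite big1 // !Yq ?mulmx0 ?addr0 //; lia.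
have : (absz (1 + q - n)%R)%:Z = 1 + q - n by rewrite gez0_abs; lia.
case: (absz _) => [|K] hK.
  rewrite big_ord1 /= (Yq n); last by lia.
  rewrite mulmx0 add0r.
  have -> : n - q + (0%N)%:Z = 1 by lia.
  by have -> : q - (0%N)%:Z = n - 1 by lia.
rewrite 2!big_ord_recr /= big1 => [|i _]; last first.
  by have i_lt := ltn_ord i; rewrite X01 ?mul0mx //=; lia.
rewrite add0r.
have -> : n - q + K%:Z = 0 by lia.
have -> : n - q + (K.+1)%:Z = 1 by lia.
have -> : q - K%:Z = n by lia.
by have -> : q - (K.+1)%:Z = n - 1 by lia.
Qed.

Lemma lmul00_oppn X Y (k : nat) :
  lmul 0 0 X Y (- (k : int)) = \sum_(i < k.+1) X ((i : int) - (k : int)) *m Y (- (i : int)).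
Proof.
rewrite /lmul.
have -> : absz (0 + 0 - - (k : int))%R = k by lia.
have -> : (- (k : int) <= 0 + 0) = true by lia.
by apply: eq_bigr => i _; congr (X _ *m Y _); lia.
Qed.

Lemma lmul00_gt0 X Y (n : int) : 0 < n -> lmul 0 0 X Y n = 0.
Proof. by move=> n_gt0; rewrite /lmul big1 // => i i_le; exfalso; lia. Qed.

End LaurentProduct.

Section GeometricSeries.
Variable A : nzRingType.
Implicit Type Q : {poly A}.

Lemma coef_expr_lt Q k i : Q`_0 = 0 -> (i < k)%N -> (Q ^+ k)`_i = 0.
Proof.
move=> Q0; elim: k i => [//|k IHk] i ik.
rewrite exprS coefM big1 // => j _.
have [->|j_gt0] := posnP j; first by rewrite Q0 mul0r.
by have j_lt := ltn_ord j; rewrite IHk ?mulr0 //; lia.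
Qed.

Definition geom_sum Q M := \sum_(k < M) Q ^+ k.

Lemma mul1B_geom_sum Q M : (1 - Q) * geom_sum Q M = 1 - Q ^+ M.
Proof.
elim: M => [|M IHM]; first by rewrite /geom_sum big_ord0 mulr0 expr0 subrr.
rewrite /geom_sum big_ord_recr /= mulrDr IHM mulrBl mul1r -exprS.
by rewrite addrA subrK.
Qed.

Lemma geom_sum_mul1B Q M : geom_sum Q M * (1 - Q) = 1 - Q ^+ M.
Proof.
elim: M => [|M IHM]; first by rewrite /geom_sum big_ord0 mul0r expr0 subrr.
rewrite /geom_sum big_ord_recr /= mulrDl IHM mulrBr mulr1 -exprSr.
by rewrite addrA subrK.
Qed.

Lemma coef_geom_sum Q M i :
  Q`_0 = 0 -> (i < M)%N -> (geom_sum Q M)`_i = (geom_sum Q i.+1)`_i.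
Proof.
move=> Q0; elim: M => [//|M IHM]; rewrite ltnS leq_eqVlt => /predU1P[-> //|iM].
by rewrite /geom_sum big_ord_recr /= coefD coef_expr_lt // addr0 IHM.
Qed.

End GeometricSeries.

Lemma lmul00_coef (R : nzRingType) (N : nat) (X Y : lser R N.+1)
    (P Q : {poly 'M[R]_N.+1}) (k : nat) :
  (forall i, (i <= k)%N -> X (- (i : int)) = P`_i) ->
  (forall i, (i <= k)%N -> Y (- (i : int)) = Q`_i) ->
  lmul 0 0 X Y (- (k : int)) = (P * Q)`_k.
Proof.
move=> XP YQ; rewrite lmul00_oppn coefMr; apply: eq_bigr => -[i /=]; rewrite ltnS => ik _.
rewrite mulmxE -XP ?leq_subr // -YQ //.
by congr (X _ * _); lia.
Qed.

Lemma lser_inverse_exists (R : nzRingType) (N m : nat) (U : lser R N) :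
  U 0 = 1%:M -> deg_le 0 U -> (forall n : int, n < - (m : int) -> U n = 0) ->
  exists V : lser R N,
    deg_le 0 V /\ lmul 0 0 U V = lone R N /\ lmul 0 0 V U = lone R N.
Proof.
case: N U => [|N] U U0 U_le0 U_low.
  exists (lone R 0); split; first by move=> n _; apply/matrixP => -[].
  by split; apply/funext => n; apply/matrixP => -[].
pose P : {poly 'M[R]_N.+1} := \poly_(i < m.+1) U (- (i : int)).
have coefP i : P`_i = U (- (i : int)).
  by rewrite coef_poly; case: ltnP => im //; rewrite U_low //; lia.
pose Q := 1 - P.
have Q0 : Q`_0 = 0 by rewrite coefB coef1 coefP oppr0 U0 subrr.
have PE : P = 1 - Q by rewrite subKr.
pose V n := if n <= 0 then (geom_sum Q (absz n).+1)`_(absz n) else 0.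
have coefV (k i : nat) : (i <= k)%N -> V (- (i : int)) = (geom_sum Q k.+1)`_i.
  move=> ik; rewrite /V; have -> : (- (i : int) <= 0) = true by lia.
  by rewrite abszN absz_nat [RHS](coef_geom_sum Q0).
have lone_coef (k : nat) : lone R N.+1 (- (k : int)) = (1 : {poly 'M[R]_N.+1})`_k.
  by case: k => [|k]; rewrite /lone coef1 //= mulr1n.
exists V; split; first by move=> n n_gt0; rewrite /V leNgt n_gt0.
split; apply/funext => n; (have [n_gt0|] := ltrP 0 n;
  first by rewrite lmul00_gt0 // /lone gt_eqF);
  move=> n_le0; have [k ->] : exists k : nat, n = - (k : int) by exists (absz n); lia.
- rewrite (lmul00_coef (fun i _ => esym (coefP i)) (coefV k)).
  by rewrite PE mul1B_geom_sum coefB coef_expr_lt // subr0 lone_coef.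
- rewrite (lmul00_coef (coefV k) (fun i _ => esym (coefP i))).
  by rewrite PE geom_sum_mul1B coefB coef_expr_lt // subr0 lone_coef.
Qed.

Section LaxMatrices.
Variables (R : realType) (N m : nat) (alpha : R).
Variables (d : 'I_N -> R) (c : nat -> 'I_N -> R).

Local Notation shift := (monomial_mx (fun _ => 1 : R) (@cyc_prev N)).
Local Notation L := (Lmat alpha d).
Local Notation U := (Umat m alpha c).
Local Notation B1 := (B1mat alpha d c).
Local Notation B2 := (B2mat alpha d c).

Lemma shiftE_monomial : shiftE R N = shift.
Proof.
apply/matrixP => i j; rewrite monomial_mxE /shiftE summxE (bigD1 j) //= big1 => [|k kj].
  rewrite !mxE eqxx andbT addr0; congr (_ *+ nat_of_bool _); apply/eqP/eqP => [->|->].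
    by rewrite (cyc_prev_addS j 0) cyc_add0.
  by rewrite (cyc_add_prevS i 0) cyc_add0.
by rewrite !mxE (eq_sym j) (negbTE kj) andbF.
Qed.

Lemma Lmat0 : L 0 = monomial_mx (fun k => 1 + alpha * d k) (fun k => k).
Proof. by rewrite /Lmat eqxx. Qed.
Lemma Lmat1 : L 1 = alpha *: shift.
Proof. by rewrite /Lmat /= shiftE_monomial. Qed.
Lemma Lmat_supp01 : supp01 L.
Proof. by move=> n /negbTE n0 /negbTE n1; rewrite /Lmat n0 n1. Qed.

Lemma B1mat0 : B1 0 = monomial_mx (fun k => d k + alpha * c 1%N (cyc_prev k)) (fun k => k).
Proof. by rewrite /B1mat eqxx. Qed.
Lemma B1mat1 : B1 1 = shift.
Proof. by rewrite /B1mat /= shiftE_monomial. Qed.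
Lemma B1mat_supp01 : supp01 B1.
Proof. by move=> n /negbTE n0 /negbTE n1; rewrite /B1mat n0 n1. Qed.

Lemma B2mat0 : B2 0 = monomial_mx (fun k => d k + alpha * c 1%N k) (fun k => k).
Proof. by rewrite /B2mat eqxx. Qed.
Lemma B2mat1 : B2 1 = shift.
Proof. by rewrite /B2mat /= shiftE_monomial. Qed.
Lemma B2mat_supp01 : supp01 B2.
Proof. by move=> n /negbTE n0 /negbTE n1; rewrite /B2mat n0 n1. Qed.

Lemma Umat0 : U 0 = 1%:M.
Proof. by rewrite /Umat eqxx. Qed.
Lemma UmatS n : U (Posz n.+1) = 0.
Proof. by []. Qed.
Lemma UmatN j : U (Negz j) =
  if (j < m)%N then - (alpha *: monomial_mx (c j.+1) (fun k => cyc_add k j.+1)) else 0.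
Proof. by []. Qed.
Lemma Umat_deg_le : deg_le 0 U.
Proof. by case=> [[|n]|j]. Qed.
Lemma Umat_low (n : int) : n < - (m : int) -> U n = 0.
Proof. by case: n => [n|j] n_low; [lia | rewrite UmatN ifN //; rewrite NegzE in n_low; lia]. Qed.

Lemma LB2_sub_B1L n : lmul 1 1 L B2 n - lmul 1 1 B1 L n =
  if n == 0 then
    alpha *: monomial_mx (fun k => (1 + alpha * d k) * (c 1%N k - c 1%N (cyc_prev k))) (fun k => k)
  else 0.
Proof.
rewrite (lmul_supp01r _ _ (supp01_deg_le Lmat_supp01) B2mat_supp01) //.
rewrite (lmul_supp01r _ _ (supp01_deg_le B1mat_supp01) Lmat_supp01) //.
have [->|n0] := eqVneq n 0.
  rewrite sub0r (Lmat_supp01 (n := -1)) // (B1mat_supp01 (n := -1)) // !mul0mx !addr0.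
  rewrite Lmat0 B1mat0 B2mat0 !mul_monomial_mx ?(monomial_mxZ, monomial_mxN, monomial_mxD).
  by apply: eq_monomial_mx => // k /=; ring.
have [->|n1] := eqVneq n 1.
  rewrite subrr Lmat0 B1mat0 B2mat0 Lmat1 B1mat1 B2mat1 -?scalemxAl -?scalemxAr.
  rewrite !mul_monomial_mx ?(monomial_mxZ, monomial_mxN, monomial_mxD).
  by rewrite -(monomial_mx0 _ (@cyc_prev N)); apply: eq_monomial_mx => // k /=; ring.
rewrite (Lmat_supp01 (n := n)) // (B1mat_supp01 (n := n)) // !mul0mx !add0r.
have [->|n2] := eqVneq n 2.
  by rewrite (_ : 2 - 1 = 1) // Lmat1 B1mat1 B2mat1 -scalemxAl -scalemxAr subrr.
by rewrite (Lmat_supp01 (n := n - 1)) ?(B1mat_supp01 (n := n - 1)) ?mul0mx ?subrr //; lia.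
Qed.

Hypothesis m_gt0 : (0 < m)%N.

Definition c_flow j k :=
  c j k * (d (cyc_add k j) - d k + alpha * c 1%N (cyc_add k j) - alpha * c 1%N (cyc_prev k))
  + (if (j < m)%N then c j.+1 k - c j.+1 (cyc_prev k) else 0).

Lemma c_flow_cases (x : nat -> 'I_N -> R) :
  (forall j k, (1 <= j <= m)%N -> x j k = c_flow j k) <->
  (forall j k, (1 <= j <= m - 1)%N ->
     x j k = c j k * (d (cyc_add k j) - d k + alpha * c 1%N (cyc_add k j)
                      - alpha * c 1%N (cyc_prev k))
             + (c j.+1 k - c j.+1 (cyc_prev k))) /\
  (forall k, x m k = c m k * (d (cyc_add k m) - d k + alpha * c 1%N (cyc_add k m)
                               - alpha * c 1%N (cyc_prev k))).
Proof.
rewrite /c_flow; split=> [flow | [flow_lt flow_m] j k j_range].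
  split=> [j k j_range | k].
    have j_lt : (j < m)%N by lia.
    by rewrite flow ?j_lt //; lia.
  by rewrite flow ?ltnn ?addr0 //; lia.
have [j_lt|j_ge] := ltnP j m; first by rewrite flow_lt //; lia.
have -> : j = m by lia.
by rewrite addr0 flow_m.
Qed.

Lemma UB2_sub_B1U n : lmul 0 1 U B2 n - lmul 1 0 B1 U n =
  match n with
  | Posz _ => 0
  | Negz j => if (j < m)%N then
                - (alpha *: monomial_mx (c_flow j.+1) (fun k => cyc_add k j.+1))
              else 0
  end.
Proof.
rewrite (@lmul_supp01r _ _ 0 _ _ n (lexx _) Umat_deg_le B2mat_supp01).
rewrite (@lmul_supp01l _ _ 0 _ _ n (lexx _) B1mat_supp01 Umat_deg_le).
rewrite B2mat0 B2mat1 B1mat0 B1mat1.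
case: n => [[|[|n]]|j].
- rewrite (_ : Posz 0 - 1 = Negz 0) // Umat0 UmatN m_gt0 scalar_mx1_monomial.
  rewrite !monomial_mxZ !monomial_mxN mul_monomial_mx_addS_prev mul_monomial_mx_prev_addS.
  rewrite !monomial_mx_add0 !mul_monomial_mx ?(monomial_mxZ, monomial_mxN, monomial_mxD).
  by rewrite -(monomial_mx0 _ (fun k : 'I_N => k)); apply: eq_monomial_mx => // k /=; ring.
- rewrite (_ : Posz 1 - 1 = Posz 0) // Umat0 UmatS !mul0mx !mulmx0 !add0r.
  rewrite scalar_mx1_monomial !mul_monomial_mx ?(monomial_mxZ, monomial_mxN, monomial_mxD).
  by rewrite -(monomial_mx0 _ (@cyc_prev N)); apply: eq_monomial_mx => // k /=; ring.
- by rewrite (_ : Posz n.+2 - 1 = Posz n.+1) // !UmatS !mul0mx !mulmx0 !addr0 subrr.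
rewrite (_ : Negz j - 1 = Negz j.+1); last by rewrite !NegzE; lia.
rewrite !UmatN /c_flow; case: (ltnP j m) => j_lt; last first.
  by rewrite ltnNge (leqW j_lt) /= !mul0mx !mulmx0 !addr0 subrr.
case: (ltnP j.+1 m) => jS_lt; rewrite ?mul0mx ?mulmx0 ?addr0.
all: rewrite !monomial_mxZ !monomial_mxN ?mul_monomial_mx_addS_prev ?mul_monomial_mx_prev_addS.
all: rewrite !mul_monomial_mx ?(monomial_mxZ, monomial_mxN, monomial_mxD).
all: by apply: eq_monomial_mx => // k /=; ring.
Qed.

Hypothesis alpha_neq0 : alpha != 0.
Variable V : lser R N.
Hypotheses (V_le0 : deg_le 0 V) (UV1 : lmul 0 0 U V = lone R N).

Lemma inverse_Umat_top :
  V 0 = 1%:M /\ V (Negz 0) = alpha *: monomial_mx (c 1%N) (fun k => cyc_add k 1).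
Proof.
have UV0 := congr1 (fun X => X (- (0%N : int))) UV1.
have UV_1 := congr1 (fun X => X (- (1%N : int))) UV1.
rewrite /= lmul00_oppn big_ord1 /lone /= Umat0 mul1mx in UV0.
rewrite /= lmul00_oppn !big_ord_recl big_ord0 /lone /= in UV_1.
have V0 : V 0 = 1%:M by rewrite -UV0.
split=> //; move: UV_1; rewrite V0 Umat0 mul1mx mulmx1 addr0.
rewrite (_ : (0%N : int) - (1%N : int) = Negz 0) // (_ : - ((bump 0 0)%N : int) = Negz 0) //.
by rewrite UmatN m_gt0 => /eqP; rewrite addrC subr_eq0 => /eqP.
Qed.

Lemma B1mat_piplus :
  B1 = piplus (fun n => alpha^-1 *: (lmul 1 0 L V n - lone R N n)).
Proof.
have [V0 V_1] := inverse_Umat_top.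
apply/funext => n; rewrite /piplus (@lmul_supp01l _ _ 0 _ _ n (lexx _) Lmat_supp01 V_le0).
case: n => [[|[|n]]|j].
- rewrite (_ : Posz 0 - 1 = Negz 0) // V_1 V0 /lone /= B1mat0 Lmat0 Lmat1 scalar_mx1_monomial.
  rewrite !monomial_mxZ mul_monomial_mx_prev_addS monomial_mx_add0 !mul_monomial_mx.
  rewrite ?(monomial_mxZ, monomial_mxN, monomial_mxD).
  by apply: eq_monomial_mx => // k /=; field.
- rewrite (_ : Posz 1 - 1 = Posz 0) // V0 (V_le0 (n := 1)) // /lone /= B1mat1 Lmat1.
  rewrite scalar_mx1_monomial mulmx0 add0r subr0 !monomial_mxZ !mul_monomial_mx.
  by rewrite !monomial_mxZ; apply: eq_monomial_mx => k //=; field.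
- rewrite (_ : Posz n.+2 - 1 = Posz n.+1) // !V_le0 // /lone /= B1mat_supp01 //.
  by rewrite !mulmx0 addr0 subr0 scaler0.
- by rewrite /= B1mat_supp01.
Qed.

Lemma B2mat_piplus :
  B2 = piplus (fun n => alpha^-1 *: (lmul 0 1 V L n - lone R N n)).
Proof.
have [V0 V_1] := inverse_Umat_top.
apply/funext => n; rewrite /piplus (@lmul_supp01r _ _ 0 _ _ n (lexx _) V_le0 Lmat_supp01).
case: n => [[|[|n]]|j].
- rewrite (_ : Posz 0 - 1 = Negz 0) // V_1 V0 /lone /= B2mat0 Lmat0 Lmat1 scalar_mx1_monomial.
  rewrite !monomial_mxZ mul_monomial_mx_addS_prev monomial_mx_add0 !mul_monomial_mx.
  rewrite ?(monomial_mxZ, monomial_mxN, monomial_mxD).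
  by apply: eq_monomial_mx => // k /=; field.
- rewrite (_ : Posz 1 - 1 = Posz 0) // V0 (V_le0 (n := 1)) // /lone /= B2mat1 Lmat1.
  rewrite scalar_mx1_monomial mul0mx add0r subr0 !monomial_mxZ !mul_monomial_mx.
  by rewrite !monomial_mxZ; apply: eq_monomial_mx => k //=; field.
- rewrite (_ : Posz n.+2 - 1 = Posz n.+1) // !V_le0 // /lone /= B2mat_supp01 //.
  by rewrite !mul0mx addr0 subr0 scaler0.
- by rewrite /= B2mat_supp01.
Qed.

End LaxMatrices.

Lemma derive1_affine (R : realType) (f : R -> R) (a b t : R) : derivable f t 1 ->
  derive1 (fun s => a * f s + b) t = a * derive1 f t.
Proof.
move=> f_der; rewrite !derive1E.
have -> : (fun s => a * f s + b) = a *: f + cst b by apply/funext.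
by rewrite deriveD ?deriveZ ?derive_cst ?addr0 //; exact: derivableZ.
Qed.

Section MatrixDerivative.
Variables (R : realType) (N : nat).

Lemma mderive_monomial (a : R) (f : 'I_N -> R -> R) g (B : 'M[R]_N) t :
  (forall k, derivable (f k) t 1) ->
  mderive (fun s => a *: monomial_mx (fun k => f k s) g + B) t =
  a *: monomial_mx (fun k => derive1 (f k) t) g.
Proof.
move=> f_der; apply/matrixP => i j; rewrite !mxE monomial_mxE.
have -> : (fun s => (a *: monomial_mx (fun k => f k s) g + B) i j) =
          (fun s => (a *+ (j == g i)) * f i s + B i j).
  by apply/funext => s; rewrite !mxE monomial_mxE mulrnAr mulrnAl.
by rewrite derive1_affine // mulrnAl mulrnAr.
Qed.

Lemma mderive_cst (B : 'M[R]_N) t : mderive (fun _ => B) t = 0.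
Proof. by apply/matrixP => i j; rewrite !mxE; exact: derive1_cst. Qed.

End MatrixDerivative.

Section LaxFlow.
Variables (R : realType) (N m : nat) (alpha : R).
Hypotheses (m_gt0 : (0 < m)%N) (alpha_neq0 : alpha != 0).
Variables (d : 'I_N -> R -> R) (c : nat -> 'I_N -> R -> R) (t : R).
Hypotheses (d_der : forall k, derivable (d k) t 1)
           (c_der : forall j k, (1 <= j <= m)%N -> derivable (c j k) t 1).

Local Notation dt := (fun k => d k t).
Local Notation ct := (fun j k => c j k t).

Lemma mderive_Lmat n :
  mderive (fun s => Lmat alpha (fun k => d k s) n) t =
  if n == 0 then alpha *: monomial_mx (fun k => derive1 (d k) t) (fun k => k) else 0.
Proof.
have [->|n0] := eqVneq n 0.
  rewrite (_ : (fun s => Lmat alpha (fun k => d k s) 0) = fun s =>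
      alpha *: monomial_mx (fun k => d k s) (fun k => k) + 1%:M); first exact: mderive_monomial.
  apply/funext => s; rewrite Lmat0 scalar_mx1_monomial monomial_mxZ monomial_mxD.
  by apply: eq_monomial_mx => // k; rewrite addrC.
rewrite (_ : (fun s => Lmat alpha (fun k => d k s) n) = fun _ => Lmat alpha (fun _ => 0) n).
  exact: mderive_cst.
by apply/funext => s; rewrite /Lmat (negbTE n0).
Qed.

Lemma mderive_Umat n :
  mderive (fun s => Umat m alpha (fun j k => c j k s) n) t =
  match n with
  | Posz _ => 0
  | Negz j => if (j < m)%N then
                - (alpha *: monomial_mx (fun k => derive1 (c j.+1 k) t) (fun k => cyc_add k j.+1))
              else 0
  end.
Proof.
case: n => [n|j].
  rewrite (_ : (fun s => Umat m alpha (fun j k => c j k s) n) =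
               fun _ => Umat m alpha (fun _ _ => 0) n); first exact: mderive_cst.
  by apply/funext => s; case: n => [|n]; rewrite ?Umat0 ?UmatS.
case: (ltnP j m) => j_lt; last first.
  rewrite (_ : (fun s => Umat m alpha (fun j k => c j k s) (Negz j)) = fun _ => 0).
    exact: mderive_cst.
  by apply/funext => s; rewrite UmatN ltnNge j_lt.
rewrite (_ : (fun s => Umat m alpha (fun j k => c j k s) (Negz j)) = fun s =>
    (- alpha) *: monomial_mx (fun k => c j.+1 k s) (fun k => cyc_add k j.+1) + 0).
  by rewrite mderive_monomial ?scaleNr // => k; apply: c_der; rewrite /= j_lt.
by apply/funext => s; rewrite UmatN j_lt addr0 scaleNr.
Qed.

Lemma lax_L_iff :
  (forall n, mderive (fun s => Lmat alpha (fun k => d k s) n) t =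
     lmul 1 1 (Lmat alpha dt) (B2mat alpha dt ct) n
     - lmul 1 1 (B1mat alpha dt ct) (Lmat alpha dt) n)
  <-> (forall k, derive1 (d k) t = (1 + alpha * d k t) * (c 1%N k t - c 1%N (cyc_prev k) t)).
Proof.
split=> [lax | flow n]; last first.
  rewrite mderive_Lmat LB2_sub_B1L; case: eqP => // _.
  by congr (_ *: _); apply: eq_monomial_mx => // k; exact: flow.
move: (lax 0); rewrite mderive_Lmat LB2_sub_B1L eqxx => /(scalerI alpha_neq0).
exact: monomial_mx_inj.
Qed.

Lemma lax_U_iff :
  (forall n, mderive (fun s => Umat m alpha (fun j k => c j k s) n) t =
     lmul 0 1 (Umat m alpha ct) (B2mat alpha dt ct) n
     - lmul 1 0 (B1mat alpha dt ct) (Umat m alpha ct) n)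
  <-> (forall j k, (1 <= j <= m)%N -> derive1 (c j k) t = c_flow m alpha dt ct j k).
Proof.
split=> [lax j k j_range | flow n]; last first.
  rewrite mderive_Umat UB2_sub_B1U //; case: n => // j; case: ifP => // j_lt.
  by congr (- (_ *: _)); apply: eq_monomial_mx => // k; apply: flow; lia.
have [i ji] : exists i, j = i.+1 by exists j.-1; lia.
subst j.
move: (lax (Negz i)); rewrite mderive_Umat UB2_sub_B1U //.
have -> : (i < m)%N by lia.
by move/oppr_inj/(scalerI alpha_neq0)/monomial_mx_inj; apply.
Qed.

End LaxFlow.

Theorem mainTheorem14 (R : realType) (N m : nat) (alpha : R)
    (hN : (2 <= N)%N) (hm : (1 <= m)%N) (halpha : alpha != 0)
    (d : 'I_N -> R -> R) (c : nat -> 'I_N -> R -> R)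
    (hd : forall k t, derivable (d k) t 1)
    (hc : forall j k t, (1 <= j <= m)%N -> derivable (c j k) t 1) :
  let dt t := fun k => d k t in
  let ct t := fun j k => c j k t in
  let L t := Lmat alpha (dt t) in
  let U t := Umat m alpha (ct t) in
  let B1 t := B1mat alpha (dt t) (ct t) in
  let B2 t := B2mat alpha (dt t) (ct t) in
  ((* Lax triads  dL/dt = L B2 - B1 L,  dU/dt = U B2 - B1 U *)
   (forall t (n : int),
      mderive (fun s => L s n) t = lmul 1 1 (L t) (B2 t) n - lmul 1 1 (B1 t) (L t) n /\
      mderive (fun s => U s n) t = lmul 0 1 (U t) (B2 t) n - lmul 1 0 (B1 t) (U t) n)
   <->
   (forall t,
      (forall k, derive1 (d k) t
         = (1 + alpha * d k t) * (c 1%N k t - c 1%N (cyc_prev k) t)) /\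
      (forall j k, (1 <= j <= m - 1)%N ->
         derive1 (c j k) t
         = c j k t * (d (cyc_add k j) t - d k t + alpha * c 1%N (cyc_add k j) t
                      - alpha * c 1%N (cyc_prev k) t)
           + (c j.+1 k t - c j.+1 (cyc_prev k) t)) /\
      (forall k, derive1 (c m k) t
         = c m k t * (d (cyc_add k m) t - d k t + alpha * c 1%N (cyc_add k m) t
                      - alpha * c 1%N (cyc_prev k) t))))
  /\
  (forall t,
     (exists V : lser R N, deg_le 0 V /\
        lmul 0 0 (U t) V = lone R N /\ lmul 0 0 V (U t) = lone R N) /\
     (forall V : lser R N, deg_le 0 V ->
        lmul 0 0 (U t) V = lone R N -> lmul 0 0 V (U t) = lone R N ->
        B1 t = piplus (fun n => alpha^-1 *: (lmul 1 0 (L t) V n - lone R N n)) /\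
        B2 t = piplus (fun n => alpha^-1 *: (lmul 0 1 V (L t) n - lone R N n)))).
Proof.
cbv beta zeta; split=> [|t]; last first.
  split=> [|V V_le0 UV1 _].
    by apply: lser_inverse_exists; [exact: Umat0 | exact: Umat_deg_le | exact: Umat_low].
  split; first exact: (B1mat_piplus _ hm halpha V_le0 UV1).
  exact: (B2mat_piplus _ hm halpha V_le0 UV1).
have lax_iff t := conj (lax_L_iff halpha c (fun k => hd k t))
  (iff_trans (lax_U_iff hm halpha d (fun j k => hc j k t))
     (c_flow_cases alpha (fun k => d k t) (fun j k => c j k t) hm
        (fun j k => derive1 (c j k) t))).
split=> [lax t | flow t n].
  by split; [apply/(lax_iff t).1 | apply/(lax_iff t).2] => n; case: (lax t n).
by split; move: n; [apply/(lax_iff t).1 | apply/(lax_iff t).2]; case: (flow t).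
Qed.
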